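(* Let $\Sigma$ be a finite set with $|\Sigma|=k\geq 3$, let $n\geq 1$, let $a,b\in\Sigma$, and let $B=\Sigma\setminus\{a,b\}$. Then every partial $n$-ary quasigroup $g:\Sigma^{n-1}\times B\to\Sigma$ has at most $2^{(k/2)^{n-1}}$ distinct extensions to an $n$-ary quasigroup $f:\Sigma^n\to\Sigma$.
   Context: An $n$-ary quasigroup of order $k=|\Sigma|$ is a function $f:\Sigma^n\to\Sigma$ such that fixing any $n-1$ of its arguments to arbitrary values of $\Sigma$ yields a bijection $\Sigma\to\Sigma$ in the remaining argument. A partial $n$-ary quasigroup is a function $g:\Omega\to\Sigma$ with $\Omega\subset\Sigma^n$ such that $g(\bar x)\neq g(\bar y)$ for any two tuples $\bar x,\bar y\in\Omega$ differing in exactly one position. An $n$-ary quasigroup $f$ is an extension of a partial $n$-ary quasigroup $g:\Omega\to\Sigma$ if $f|_{\Omega}=g$. Here $\Sigma^{n-1}\times B$ denotes the set of tuples in $\Sigma^n$ whose last coordinate lies in $B$. *)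

From Stdlib Require Import Reals.
From mathcomp Require Import all_boot.
From mathcomp Require Import boolp.

Set Implicit Arguments.
Unset Strict Implicit.
Unset Printing Implicit Defensive.

Notation tup n Sigma := {ffun 'I_n -> Sigma}.

Definition upd (Sigma : finType) (n : nat) (x : tup n Sigma) (i : 'I_n) (s : Sigma)
  : tup n Sigma := [ffun j => if j == i then s else x j].

Definition is_quasigroup (Sigma : finType) (n : nat) (f : tup n Sigma -> Sigma) : Prop :=
  forall (x : tup n Sigma) (i : 'I_n), bijective (fun s : Sigma => f (upd x i s)).

Definition differ_in_one (Sigma : finType) (n : nat) (x y : tup n Sigma) : bool :=
  #|[set j : 'I_n | x j != y j]| == 1.

(* partial n-ary quasigroup g : Omega -> Sigma (g is given as a total function,
   only its values on Omega matter) *)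
Definition is_partial_quasigroup (Sigma : finType) (n : nat)
  (Omega : pred (tup n Sigma)) (g : tup n Sigma -> Sigma) : Prop :=
  forall x y, Omega x -> Omega y -> differ_in_one x y -> g x != g y.

(* the domain Sigma^(n-1) x B: last coordinate (index n-1) lies in B *)
Definition last_in (Sigma : finType) (n : nat) (B : pred Sigma) : pred (tup n Sigma) :=
  fun x => [forall i : 'I_n, (val i == n.-1) ==> B (x i)].

Definition extends (Sigma : finType) (n : nat) (Omega : pred (tup n Sigma))
  (g : tup n Sigma -> Sigma) (f : tup n Sigma -> Sigma) : Prop :=
  forall x, Omega x -> f x = g x.

Definition extensions (Sigma : finType) (n : nat) (Omega : pred (tup n Sigma))
  (g : tup n Sigma -> Sigma) : {set {ffun tup n Sigma -> Sigma}} :=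
  [set f : {ffun tup n Sigma -> Sigma} |
     `[< is_quasigroup f /\ extends Omega g f >]].

From Stdlib Require Import Reals Lra.
From mathcomp Require Import all_boot.
From mathcomp Require Import boolp.

Set Implicit Arguments.
Unset Strict Implicit.
Unset Printing Implicit Defensive.

(** An extension f is determined by its values on the layer of tuples with
    last coordinate a: along each column (the last coordinate varying) f takes
    the values of g on B, so f at the a- and b-entries of the column are the two
    values missing from g there. Call two tuples of the layer adjacent if they
    differ in one coordinate and their columns miss a common value u; then f
    takes the value u at exactly one of them, so f at one of them determines f
    at the other. Thus f is fixed by a choice between two values at one tuple
    per connected component. Given one extension f0, each tuple of the layer
    has a neighbour along each of the first n-1 coordinates, so every component
    contains a copy of {0,1}^(n-1). Hence there are at most (k/2)^(n-1)
    components and at most 2^((k/2)^(n-1)) extensions. *)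

Section Update.
Variables (S : finType) (n : nat).
Implicit Types (x y : tup n S) (i j : 'I_n) (s t : S) (f : tup n S -> S).

Lemma upd_id x i : upd x i (x i) = x.
Proof. by apply/ffunP=> j; rewrite ffunE; case: eqP => // ->. Qed.

Lemma upd_eq x i s : upd x i s i = s.
Proof. by rewrite ffunE eqxx. Qed.

Lemma upd_neq x i j s : j != i -> upd x i s j = x j.
Proof. by rewrite ffunE => /negbTE ->. Qed.

Lemma differ_in_oneC x y : differ_in_one x y = differ_in_one y x.
Proof.
rewrite /differ_in_one (_ : [set j | x j != y j] = [set j | y j != x j]) //.
by apply/setP=> j; rewrite !inE eq_sym.
Qed.

Lemma differ_in_one_upd x i s : s != x i -> differ_in_one x (upd x i s).
Proof.
move=> sx; apply/cards1P; exists i; apply/setP=> j; rewrite !inE ffunE.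
by case: (eqVneq j i) => [->|]; rewrite ?eqxx // eq_sym.
Qed.

Lemma differ_in_one_upd2 x y i s : x i = y i ->
  differ_in_one (upd x i s) (upd y i s) = differ_in_one x y.
Proof.
move=> xy; rewrite /differ_in_one.
rewrite (_ : [set j | _ != _] = [set j | x j != y j]) //.
by apply/setP=> j; rewrite !inE !ffunE; case: (eqVneq j i) => [->|]; rewrite ?xy ?eqxx.
Qed.

Lemma quasigroup_inj f x i : is_quasigroup f -> injective (fun s => f (upd x i s)).
Proof. by move=> /(_ x i) /bij_inj. Qed.

Lemma quasigroup_surj f x i t : is_quasigroup f -> exists s, f (upd x i s) = t.
Proof. by move=> /(_ x i) [h _ hK]; exists (h t); rewrite hK. Qed.

Lemma quasigroup_differ_in_one f x y :
  is_quasigroup f -> differ_in_one x y -> f x != f y.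
Proof.
move=> qf /cards1P[i Dxy]; have xy_i : x i != y i by have := set11 i; rewrite -Dxy inE.
have Ey : y = upd x i (y i).
  apply/ffunP=> j; rewrite ffunE; case: eqP => [-> //|/eqP ji].
  by apply/eqP; apply: contraNT ji => xy_j; rewrite -in_set1 -Dxy inE eq_sym.
apply: contra xy_i => /eqP fxy; apply/eqP; apply: (quasigroup_inj (x:=x) (i:=i) qf).
by rewrite /= upd_id -Ey.
Qed.

End Update.

Lemma last_inE (S : finType) m (B : pred S) (x : tup m.+1 S) :
  last_in B x = B (x ord_max).
Proof.
apply/forallP/idP => [allB|Bx i]; first by have := allB ord_max; rewrite /= eqxx.
by apply/implyP=> /eqP Hi; have -> : i = ord_max by apply/val_inj.
Qed.

Lemma n_comp_mul_leq (T : finType) (e : rel T) (A : pred T) c :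
  connect_sym e -> closed e A ->
  (forall x, A x -> c <= #|[set y | connect e x y]|) -> n_comp e A * c <= #|A|.
Proof.
move=> sym clA large.
have AeE x y : connect e x y -> A x = A y by move/(closed_connect clA).
rewrite -sum_nat_const -sum1_card.
rewrite [X in _ <= X](partition_big (root e) [in predI (roots e) A]); last first.
  move=> x Ax; rewrite inE /= /roots (root_root sym) eqxx.
  by rewrite -(AeE _ _ (connect_root e x)).
rewrite (eq_bigl [in predI (roots e) A]) //.
apply: leq_sum => r /andP[/eqP rr Ar]; rewrite sum1_card.
apply: leq_trans (large r Ar) _; apply: subset_leq_card; apply/subsetP=> y.
rewrite !inE => ry; rewrite unfold_in -topredE /= -(AeE _ _ ry) Ar -rr.
exact/eqP/esym/(rootP sym).
Qed.

Section CubeInComponent.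
Variables (S : finType) (n m : nat) (e : rel (tup n S)) (A : pred (tup n S)).
Hypothesis leq_mn : m <= n.
Hypothesis closed_eA : closed e A.
Hypothesis e_step : forall x (i : 'I_n), A x -> i < m ->
  exists2 s, s != x i & e x (upd x i s).

Lemma connect_subcube x j : A x -> j <= m -> exists2 T : {set tup n S},
  2 ^ j <= #|T| &
  forall y, y \in T -> connect e x y /\ forall i : 'I_n, j <= i -> y i = x i.
Proof.
move=> Ax; elim: j => [_|j IHj lt_jm].
  by exists [set x] => [|y /set1P ->]; rewrite ?cards1.
have [T cardT sT] := IHj (ltnW lt_jm).
pose i := Ordinal (leq_trans lt_jm leq_mn).
pose flip y := upd y i (odflt (y i) [pick s | (s != y i) && e y (upd y i s)]).
have flip_spec y : y \in T -> flip y i != x i /\ e y (flip y).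
  move=> /sT[xy yx]; rewrite /flip upd_eq -(yx i) //.
  case: pickP => [s /andP[] //|none].
  have Ay : A y by move: Ax; rewrite -[A x]/(x \in A) (closed_connect closed_eA xy).
  by have [s s_neq eys] := e_step (i := i) Ay lt_jm; have := none s; rewrite s_neq eys.
have flip_off y k : k != i -> flip y k = y k by move=> ki; rewrite upd_neq.
have disjT : [disjoint T & flip @: T].
  apply/pred0P=> y /=; apply/andP=> -[yT /imsetP[z zT yz]].
  have [_ yx] := sT y yT; have [flip_i _] := flip_spec z zT.
  by move: flip_i; rewrite -yz yx ?eqxx.
exists (T :|: flip @: T).
  have /eqP -> : #|T :|: flip @: T| == #|T| + #|flip @: T|.
    by rewrite (leq_card_setU T _).2.
  rewrite card_in_imset ?expnS ?mul2n -?addnn ?leq_add //.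
  move=> y z yT zT fyz; apply/ffunP=> k; have [->|ki] := eqVneq k i.
    by have [_ yx] := sT y yT; have [_ zx] := sT z zT; rewrite yx ?zx.
  by rewrite -(flip_off y k ki) fyz flip_off.
move=> y /setUP[/sT[xy yx]|/imsetP[z zT ->]].
  by split=> // k jk; apply: yx; apply: ltnW.
have [xz zx] := sT z zT; have [_ ez] := flip_spec z zT.
split; first exact: connect_trans xz (connect1 ez).
move=> k jk; rewrite flip_off ?zx 1?ltnW //.
by rewrite -val_eqE /= neq_ltn jk orbT.
Qed.

Lemma connect_card_ge x : A x -> 2 ^ m <= #|[set y | connect e x y]|.
Proof.
move=> Ax; have [T cardT sT] := connect_subcube Ax (leqnn m).
apply: leq_trans cardT (subset_leq_card _).
by apply/subsetP=> y /sT[xy _]; rewrite inE.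
Qed.

End CubeInComponent.

Section Extensions.
Variables (S : finType) (m : nat) (a b : S) (g : tup m.+1 S -> S).

Local Notation B := (fun s : S => (s != a) && (s != b)).
Local Notation "z .[ c ]" := (upd z ord_max c).
Implicit Types (x y z : tup m.+1 S) (c d u : S).

Definition is_extension (f : tup m.+1 S -> S) :=
  is_quasigroup f /\ extends (last_in B) g f.

(* For an extension f these are exactly the values f z.[a] and f z.[b]. *)
Definition missing (z : tup m.+1 S) (u : S) := [forall c, B c ==> (g z.[c] != u)].

Definition layer : pred (tup m.+1 S) := fun x => x ord_max == a.

Lemma in_layer x : (x \in layer) = (x ord_max == a).
Proof. by []. Qed.

Lemma extensionsP (f : {ffun tup m.+1 S -> S}) :
  reflect (is_extension f) (f \in extensions (last_in B) g).
Proof. by rewrite inE; apply: asboolP. Qed.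

Lemma last_in_upd z c : last_in B z.[c] = B c.
Proof. by rewrite last_inE upd_eq. Qed.

Lemma upd_last_id z : z ord_max = a -> z.[a] = z.
Proof. by move=> <-; rewrite upd_id. Qed.

Section OneExtension.
Variable f : tup m.+1 S -> S.
Hypothesis f_ext : is_extension f.

Lemma ext_on_B z c : B c -> f z.[c] = g z.[c].
Proof. by move=> Bc; apply: f_ext.2; rewrite last_in_upd. Qed.

Lemma missing_ext_value z d : ~~ B d -> missing z (f z.[d]).
Proof.
move=> nBd; apply/forallP=> c; apply/implyP=> Bc.
rewrite -ext_on_B //; apply/eqP => /(quasigroup_inj f_ext.1) cd.
by move: nBd; rewrite -cd Bc.
Qed.

Lemma missing_taken z u : missing z u -> f z.[a] = u \/ f z.[b] = u.
Proof.
move=> /forallP miss; have [c fc] := quasigroup_surj z ord_max u f_ext.1.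
case Bc: (B c); first by move: (miss c); rewrite Bc -ext_on_B // fc eqxx.
by move: Bc fc; case: eqP => [-> _|_ /negbFE/eqP ->]; [left | right].
Qed.

Lemma ext_flip x y u : x ord_max = a -> y ord_max = a -> differ_in_one x y ->
  missing x u -> missing y u -> (f y == u) = (f x != u).
Proof.
move=> xa ya dxy mx my; have qf := f_ext.1.
have fxy := quasigroup_differ_in_one qf dxy.
have fxy_b : f x.[b] != f y.[b].
  by apply: quasigroup_differ_in_one qf _; rewrite differ_in_one_upd2 ?xa.
case: (missing_taken mx); rewrite ?upd_last_id // => fx.
  by rewrite fx eqxx; apply/negbTE; rewrite -fx eq_sym.
case: (missing_taken my); rewrite ?upd_last_id // => fy.
  by rewrite -fy eqxx fxy.
by move: fxy_b; rewrite fx fy eqxx.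
Qed.

End OneExtension.

Lemma ext_other f f' z : is_extension f -> is_extension f' ->
  f z.[a] != f' z.[a] -> f z.[a] = f' z.[b].
Proof.
move=> ef ef' neq; have := missing_ext_value ef z (d := a).
rewrite eqxx => /(_ isT).
by case/(missing_taken ef') => h //; rewrite h eqxx in neq.
Qed.

Lemma ext_eq_on_layer (f f' : {ffun tup m.+1 S -> S}) :
  is_extension f -> is_extension f' -> {in layer, f =1 f'} -> f = f'.
Proof.
move=> ef ef' eq_a; apply/ffunP=> z; rewrite -(upd_id z ord_max).
have [za|za] := eqVneq (z ord_max) a; first by rewrite za eq_a // in_layer upd_eq.
case Bz: (B (z ord_max)); first by rewrite !ext_on_B.
move: Bz; rewrite za /= => /negbFE/eqP zb; rewrite zb.
have := missing_ext_value ef z (d := b); rewrite eqxx andbF => /(_ isT).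
case/(missing_taken ef') => [|-> //]; rewrite -eq_a ?in_layer ?upd_eq //.
by move/(quasigroup_inj ef.1) => ab; rewrite zb ab eqxx in za.
Qed.

Definition adj : rel (tup m.+1 S) := fun x y =>
  [&& x \in layer, y \in layer, differ_in_one x y &
      [exists u, missing x u && missing y u]].

Lemma adj_sym : symmetric adj.
Proof.
suff adjC x y : adj x y -> adj y x by move=> x y; apply/idP/idP; apply: adjC.
case/and4P=> xa ya dxy /existsP[u /andP[mx my]].
by rewrite /adj xa ya differ_in_oneC dxy; apply/existsP; exists u; rewrite mx my.
Qed.

Lemma adj_closed : closed adj layer.
Proof. by move=> x y /and4P[xa ya _ _]; rewrite xa ya. Qed.

Lemma ext_adj f f' x y : is_extension f -> is_extension f' ->
  adj x y -> f x = f' x -> f y = f' y.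
Proof.
move=> ef ef' /and4P[/eqP xa /eqP ya dxy /existsP[u /andP[mx my]]] fxx.
have flip : (f y == u) = (f' y == u).
  by rewrite (ext_flip ef xa ya dxy mx my) (ext_flip ef' xa ya dxy mx my) fxx.
have [fy|fy] := eqVneq (f y) u; first by move: flip; rewrite fy eqxx => /esym/eqP.
apply/eqP; apply: contraT => neq; have := ext_other ef ef' (z := y).
rewrite !upd_last_id // => /(_ neq) fyb.
case: (missing_taken ef' my) => h; rewrite ?(upd_last_id ya) in h.
  by move: flip; rewrite h eqxx (negbTE fy).
by move: fy; rewrite fyb h eqxx.
Qed.

Lemma ext_connect f f' x y : is_extension f -> is_extension f' ->
  connect adj x y -> f x = f' x -> f y = f' y.
Proof.
move=> ef ef' /connectP[p xp ->]; elim: p x xp => [//|z p IHp] x /= /andP[xz zp] fx.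
exact: IHp zp (ext_adj ef ef' xz fx).
Qed.

Lemma adj_step f0 x (i : 'I_m.+1) : is_extension f0 -> a != b ->
  x \in layer -> i < m -> exists2 s, s != x i & adj x (upd x i s).
Proof.
move=> ef0 ab /eqP xa lt_im; have qf := ef0.1.
have i_last : ord_max != i by rewrite -val_eqE /= neq_ltn lt_im orbT.
(* The new coordinate is chosen so that f0 takes the value f0 x.[b]. *)
have [s fs] := quasigroup_surj x i (f0 x.[b]) qf.
have ya : upd x i s ord_max = a by rewrite upd_neq.
have s_neq : s != x i.
  apply: contra ab => /eqP sx; move: fs; rewrite sx upd_id -{1}(upd_last_id xa).
  by move/(quasigroup_inj qf)=> ->.
exists s; rewrite // /adj !in_layer xa ya eqxx differ_in_one_upd //=.
apply/existsP; exists (f0 x.[b]); rewrite missing_ext_value ?eqxx ?andbF //=.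
by rewrite -fs -{2}(upd_last_id ya) missing_ext_value ?eqxx.
Qed.

Lemma card_layer : #|layer| <= #|S| ^ m.
Proof.
pose init x : {ffun 'I_m -> S} := [ffun j => x (widen_ord (leqnSn m) j)].
rewrite -[m in #|S| ^ m]card_ord -card_ffun; apply: (@leq_card_in _ _ init).
move=> x y /eqP xa /eqP ya /ffunP init_xy; apply/ffunP=> k.
have [lt_km|] := ltnP k m.
  by have := init_xy (Ordinal lt_km); rewrite !ffunE; congr (x _ = y _); apply: val_inj.
rewrite leq_eqVlt ltnNge -ltnS ltn_ord orbF => /eqP km.
have -> : k = ord_max by apply: val_inj.
by rewrite xa ya.
Qed.

Lemma n_comp_adj_le f0 : is_extension f0 -> a != b ->
  n_comp adj layer * 2 ^ m <= #|S| ^ m.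
Proof.
move=> ef0 ab; apply: leq_trans card_layer.
apply: n_comp_mul_leq (sym_connect_sym adj_sym) adj_closed _ => x x_a.
apply: (connect_card_ge (leqnSn m) adj_closed _ x_a) => y i y_a.
exact: adj_step ef0 ab y_a.
Qed.

Lemma card_extensions_le f0 : is_extension f0 ->
  #|extensions (last_in B) g| <= 2 ^ n_comp adj layer.
Proof.
move=> ef0; set R := [set r | roots adj r && layer r].
have -> : n_comp adj layer = #|R| by rewrite cardsE.
pose agree (f : {ffun tup m.+1 S -> S}) := [set r in R | f r == f0 r].
rewrite -card_powerset -(card_in_imset (f := agree)); last first.
  move=> f f' /extensionsP ef /extensionsP ef' eq_agree.
  apply: (ext_eq_on_layer ef ef') => x x_a.
  have sym := sym_connect_sym adj_sym; set r := root adj x.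
  have rR : roots adj r && (r \in layer).
    rewrite /roots (root_root sym) eqxx /=.
    by rewrite (closed_connect adj_closed (connect_root _ x)) in x_a.
  apply: (ext_connect (x := r) ef ef'); first by rewrite sym connect_root.
  have /eqP r_a : r \in layer by case/andP: rR.
  have other f1 : is_extension f1 -> f1 r != f0 r -> f1 r = f0 r.[b].
    by move=> ef1; rewrite -{1 2 3}(upd_last_id r_a); apply: ext_other.
  have := congr1 (fun X : {set _} => r \in X) eq_agree; rewrite /= !inE rR /=.
  have [fr /esym/eqP f'r|fr /esym/negbT f'r] := eqVneq (f r) (f0 r).
    by rewrite fr f'r.
  by rewrite (other f) // (other f').
apply: subset_leq_card; apply/subsetP => _ /imsetP[f _ ->].
by rewrite powersetE; apply/subsetP=> r; rewrite inE => /andP[].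
Qed.

Lemma card_extensions_le1 : a = b -> #|extensions (last_in B) g| <= 1.
Proof.
move=> eq_ab; apply/card_le1_eqP => f f' /extensionsP ef /extensionsP ef'.
apply/esym; apply: (ext_eq_on_layer ef ef') => x /eqP x_a.
apply/eqP; apply: contraT => neq.
have := ext_other ef ef' (z := x); rewrite -eq_ab !upd_last_id // => /(_ neq) fx.
by rewrite fx eqxx in neq.
Qed.

Lemma card_extensions_bound : exists2 r,
  #|extensions (last_in B) g| <= 2 ^ r & r * 2 ^ m <= #|S| ^ m.
Proof.
have [eq_ab|ab] := eqVneq a b; first by exists 0; rewrite ?card_extensions_le1.
have [f0 /extensionsP ef0|none] := pickP (mem (extensions (last_in B) g)).
  exists (n_comp adj layer); first exact: card_extensions_le ef0.
  exact: n_comp_adj_le ef0 ab.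
by exists 0; rewrite // (eq_card0 none).
Qed.

End Extensions.

Section RealBound.
Local Open Scope R_scope.

Lemma INR_expn (k m : nat) : INR (k ^ m) = INR k ^ m.
Proof. by elim: m => [|m IHm]; rewrite ?expn0 // expnS -multE mult_INR IHm. Qed.

Lemma INR_le_Rpower (N r k m : nat) : (N <= 2 ^ r)%N -> (r * 2 ^ m <= k ^ m)%N ->
  INR N <= Rpower 2 ((INR k / 2) ^ m).
Proof.
have le_R p q : (p <= q)%N -> INR p <= INR q by move/leP; apply: le_INR.
have INR2 : INR 2 = 2 by rewrite /=; lra.
move=> /le_R N_le /le_R r_le; rewrite INR_expn INR2 in N_le.
rewrite -multE mult_INR !INR_expn INR2 in r_le.
have pos2m : 0 < 2 ^ m by apply: pow_lt; lra.
have r_le' : INR r <= (INR k / 2) ^ m.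
  rewrite /Rdiv Rpow_mult_distr pow_inv; apply: (Rmult_le_reg_r (2 ^ m)) => //.
  by rewrite Rmult_assoc Rinv_l ?Rmult_1_r //; apply: Rgt_not_eq.
apply: Rle_trans N_le _; rewrite -Rpower_pow; last by lra.
by apply: Rle_Rpower => //; lra.
Qed.

End RealBound.

Theorem lemma1 (Sigma : finType) (n : nat) (a b : Sigma)
  (g : {ffun 'I_n -> Sigma} -> Sigma) :
  (3 <= #|Sigma|)%N -> (1 <= n)%N ->
  is_partial_quasigroup (@last_in Sigma n (fun s : Sigma => (s != a) && (s != b))) g ->
  Rle (INR #|extensions (@last_in Sigma n (fun s : Sigma => (s != a) && (s != b))) g|)
      (Rpower 2 (Rdiv (INR #|Sigma|) 2 ^ (n - 1))).
Proof.
case: n g => // m g _ _ _; rewrite subSS subn0.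
have [r card_ext r_le] := card_extensions_bound a b g.
exact: INR_le_Rpower card_ext r_le.
Qed.
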